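(* Let $x$ be an integer with $0\le x\le p-1$ and $w$ a positive integer. Let $N_x$ be the least period of $(T_n^i(x)\bmod p)_{i\ge0}$ and $l_x$ the multiplicative order modulo $p$ of $T'_{n^{N_x}}(x)$. If $T_{n^{N_xl_x}}(x)\equiv x\pmod{p^w}$, then $T'_{n^{N_xl_x}}(x)\equiv 1\pmod{p^w}$ holds if and only if $n^{2\,\mathrm{ord}(n^2)}\equiv 1\pmod{p^w}$, where $\mathrm{ord}(n^2)$ is the multiplicative order of $n^2$ modulo $p$.
   Context: $p$ is a prime with $p>3$ and $n>1$ is an integer with $\gcd(n,p)=\gcd(n,p^2-1)=1$. $T_d(x)\in\mathbb{Z}[x]$ is the Chebyshev polynomial of the first kind: $T_0=1$, $T_1=x$, $T_d=2xT_{d-1}-T_{d-2}$; $T'_d$ is its derivative. $T_n^i$ is the $i$-fold composition of $T_n$ ($T_n^0(x)=x$), equal to $T_{n^i}$. The least period of $(T_n^i(x)\bmod p)_{i\ge0}$ is the least positive $N$ with $T_n^N(x)\equiv x\pmod p$. *)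

From HB Require Import structures.
From mathcomp Require Import all_boot all_order all_algebra.
Set Implicit Arguments. Unset Strict Implicit. Unset Printing Implicit Defensive.
Import Order.TTheory GRing.Theory Num.Theory.
Local Open Scope ring_scope.

(* Chebyshev polynomials of the first kind over Z:
   cheb_pair d = (T_d, T_{d+1}), with T_0 = 1, T_1 = X, T_{d+2} = 2 X T_{d+1} - T_d. *)
Fixpoint cheb_pair (d : nat) : {poly int} * {poly int} :=
  match d with
  | 0%N => (1, 'X)
  | d'.+1 => let (a, b) := cheb_pair d' in (b, 2%:P * 'X * b - a)
  end.

Definition chebT (d : nat) : {poly int} := (cheb_pair d).1.

Definition least_period (p n : nat) (x : int) (N : nat) : Prop :=
  (0 < N)%N /\ ((chebT (n ^ N)).[x] == x %[mod (p : int)])%Z /\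
  (forall j : nat, (0 < j < N)%N -> ~ ((chebT (n ^ j)).[x] == x %[mod (p : int)])%Z).

Definition mult_order (m : nat) (a : int) (k : nat) : Prop :=
  (0 < k)%N /\ (a ^+ k == 1 %[mod (m : int)])%Z /\
  (forall j : nat, (0 < j < k)%N -> ~ (a ^+ j == 1 %[mod (m : int)])%Z).

(* Let d = n^(Nx lx) and t = T_d'(x).  By the chain rule t is congruent mod p to
   T'_(n^Nx)(x)^lx, hence to 1.  We then compare t with d^2 modulo p^w, using
   T_d(x) = x (mod p^w):
   - if x = 1, then t = d^2 exactly;
   - if x = p - 1, then d is odd (so is n, as 2 | p^2 - 1) and by parity we may
     work at 1 - p.  Writing T_d(1 - y) = sum_k c_k y^k, the recurrence
     (k + 1)(2k + 1) c_(k+1) = (k^2 - d^2) c_k shows that c_k p^k, k >= 2, has two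
     more factors p than d^2 - 1; this forces d^2 = 1 (mod p^(w-1)), and then
     t = d^2 (mod p^w);
   - otherwise 1 - x^2 is prime to p, and (1 - X^2) T_d'^2 = d^2 (1 - T_d^2) gives
     t^2 = d^2 (mod p^w); since t = 1 (mod p) and p is odd, t = 1 iff d^2 = 1.
   Finally d^2 = (n^2)^(Nx lx) with Nx, lx < p, and for a = 1 (mod p) and k prime
   to p, a^k = 1 (mod p^w) iff a = 1 (mod p^w); apply this to a = (n^2)^ord(n^2). *)

From HB Require Import structures.
From mathcomp Require Import all_boot all_order all_algebra all_solvable.
From mathcomp Require Import ring zify.
Import Order.TTheory GRing.Theory Num.Theory.
Local Open Scope ring_scope.
Set Implicit Arguments. Unset Strict Implicit. Unset Printing Implicit Defensive.

Lemma PoszX (m k : nat) : (m ^ k)%N = m%:Z ^+ k :> int.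
Proof. by rewrite -!natz natrX. Qed.

Lemma primez_neq0 p : prime p -> p%:Z != 0.
Proof. by move=> p_pr; rewrite eqz_nat -lt0n prime_gt0. Qed.

Lemma dvdz_subr_trans (m a b c : int) :
  (m %| a - b)%Z -> (m %| b - c)%Z -> (m %| a - c)%Z.
Proof. by move=> hab hbc; rewrite -(subrKA b) rpredD. Qed.

Lemma dvdz_subC (m a b : int) : (m %| a - b)%Z = (m %| b - a)%Z.
Proof. by rewrite -opprB rpredN. Qed.

Lemma dvdz_mulrB (m a1 a2 b1 b2 : int) :
  (m %| a1 - b1)%Z -> (m %| a2 - b2)%Z -> (m %| a1 * a2 - b1 * b2)%Z.
Proof.
move=> h1 h2; have -> : a1 * a2 - b1 * b2 = (a1 - b1) * a2 + b1 * (a2 - b2) by ring.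
by apply: rpredD; [apply: dvdz_mulr | apply: dvdz_mull].
Qed.

Lemma dvdz_exprB (a b : int) k : (a - b %| a ^+ k - b ^+ k)%Z.
Proof. by rewrite subrXX dvdz_mulr ?dvdzz. Qed.

Lemma dvdz_hornerB (q : {poly int}) (a b : int) : (a - b %| q.[a] - q.[b])%Z.
Proof.
have [r qE] : exists r, q - q.[b]%:P = r * ('X - b%:P).
  by apply/factor_theorem; rewrite /root !hornerE subrr.
by have := congr1 (horner^~ a) qE; rewrite !hornerE => ->; rewrite dvdz_mull ?dvdzz.
Qed.

(* [cheb_TV d] = (T_d, U_(d-1)), with U the Chebyshev polynomials of the second kind. *)
Fixpoint cheb_TV (d : nat) : {poly int} * {poly int} :=
  if d is d'.+1 then
    ('X * (cheb_TV d').1 + ('X^2 - 1) * (cheb_TV d').2,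
     (cheb_TV d').1 + 'X * (cheb_TV d').2)
  else (1, 0).

Definition chebV (d : nat) : {poly int} := (cheb_TV d).2.

Lemma chebT0 : chebT 0 = 1. Proof. by []. Qed.

Lemma chebV0 : chebV 0 = 0. Proof. by []. Qed.

Lemma chebTSS d : chebT d.+2 = 2 * 'X * chebT d.+1 - chebT d.
Proof. by rewrite /chebT /=; case: (cheb_pair d) => a b /=; rewrite polyC_natr. Qed.

Lemma cheb_TV_fst d : (cheb_TV d).1 = chebT d.
Proof.
suff: (cheb_TV d).1 = chebT d /\ (cheb_TV d.+1).1 = chebT d.+1 by case.
elim: d => [|d [IH1 IH2]]; first by split => //=; rewrite mulr1 mulr0 addr0.
split=> //; rewrite chebTSS -IH1 -IH2 /=; ring.
Qed.

Lemma chebTS d : chebT d.+1 = 'X * chebT d + ('X^2 - 1) * chebV d.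
Proof. by rewrite -!cheb_TV_fst. Qed.

Lemma chebVS d : chebV d.+1 = chebT d + 'X * chebV d.
Proof. by rewrite -cheb_TV_fst. Qed.

Lemma chebT1 : chebT 1 = 'X.
Proof. by rewrite chebTS chebT0 chebV0 mulr0 addr0 mulr1. Qed.

Lemma chebT_pell d : chebT d ^+ 2 - ('X^2 - 1) * chebV d ^+ 2 = 1.
Proof.
elim: d => [|d IH]; first by rewrite chebT0 chebV0 expr1n expr0n mulr0 subr0.
by rewrite chebTS chebVS -[RHS]IH; ring.
Qed.

Lemma cheb_addn a b :
  chebT (a + b) = chebT a * chebT b + ('X^2 - 1) * chebV a * chebV b /\
  chebV (a + b) = chebT a * chebV b + chebV a * chebT b.
Proof.
elim: a => [|a [IHT IHV]]; first by rewrite add0n chebT0 chebV0; split; ring.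
by rewrite addSn !chebTS !chebVS IHT IHV; split; ring.
Qed.

Lemma chebT_rec_stride a b : chebT (a + b + b) = 2 * chebT b * chebT (a + b) - chebT a.
Proof.
have [-> _] := cheb_addn (a + b) b; have [-> ->] := cheb_addn a b.
have pell_a : chebT a = chebT a * (chebT b ^+ 2 - ('X^2 - 1) * chebV b ^+ 2).
  by rewrite chebT_pell mulr1.
by rewrite [X in _ = _ - X]pell_a; ring.
Qed.

Lemma chebT_comp a b : chebT a \Po chebT b = chebT (a * b).
Proof.
suff: chebT a \Po chebT b = chebT (a * b) /\
      chebT a.+1 \Po chebT b = chebT (a.+1 * b) by case.
elim: a => [|a [IH1 IH2]].
  by rewrite mul1n chebT0 chebT1 comp_polyC comp_polyX.
split=> //; rewrite chebTSS -polyC_natr comp_polyB !comp_polyM comp_polyC.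
by rewrite comp_polyX IH1 IH2 polyC_natr !mulSnr chebT_rec_stride.
Qed.

Lemma cheb_deriv d :
  (chebT d)^`() = chebV d *+ d /\
  ('X^2 - 1) * (chebV d)^`() = chebT d *+ d - 'X * chebV d.
Proof.
elim: d => [|d [IHT IHV]].
  by rewrite chebT0 chebV0 -polyC1 derivC deriv0; split; ring.
rewrite chebTS chebVS !derivE IHT.
split; first by rewrite IHV /=; ring.
by rewrite !mulrDr [('X^2 - 1) * ('X * _)]mulrCA IHV; ring.
Qed.

Lemma chebT_deriv d : (chebT d)^`() = chebV d *+ d.
Proof. exact: (cheb_deriv d).1. Qed.

Lemma chebT_ode d :
  (1 - 'X^2) * (chebT d)^`()^`() - 'X * (chebT d)^`() + chebT d *+ (d * d) = 0.
Proof.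
have chebV_ode := (cheb_deriv d).2.
rewrite chebT_deriv derivMn.
transitivity ((chebT d *+ d - 'X * chebV d - ('X^2 - 1) * (chebV d)^`()) *+ d).
  by rewrite mulrnA; ring.
by rewrite chebV_ode subrr mul0rn.
Qed.

Lemma chebT_deriv_sqr d :
  (1 - 'X^2) * (chebT d)^`() ^+ 2 = (1 - chebT d ^+ 2) *+ (d * d).
Proof. by rewrite chebT_deriv -[X in _ = (X - _) *+ _](chebT_pell d) mulrnA; ring. Qed.

Lemma chebTV_at1 d : (chebT d).[1] = 1 /\ (chebV d).[1] = d%:R.
Proof.
elim: d => [|d [IHT IHV]]; first by rewrite chebT0 chebV0 hornerC horner0.
by rewrite chebTS chebVS !hornerE IHT IHV; split; ring.
Qed.

Lemma chebT_deriv_at1 d : ((chebT d)^`()).[1] = (d * d)%:R.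
Proof. by rewrite chebT_deriv hornerMn (chebTV_at1 d).2 natrM mulr_natr. Qed.

Lemma chebTV_oppr d (z : int) :
  (chebT d).[- z] = (-1) ^+ d * (chebT d).[z] /\
  (chebV d).[- z] = - (-1) ^+ d * (chebV d).[z].
Proof.
elim: d => [|d [IHT IHV]]; first by rewrite chebT0 chebV0 !hornerE; split; ring.
by rewrite chebTS chebVS !hornerE IHT IHV !exprS; split; ring.
Qed.

Lemma chebT_odd_oppr d (z : int) : odd d ->
  (chebT d).[- z] = - (chebT d).[z] /\ ((chebT d)^`()).[- z] = ((chebT d)^`()).[z].
Proof.
move=> d_odd; have [TN VN] := chebTV_oppr d z.
by rewrite chebT_deriv !hornerMn TN VN -signr_odd d_odd expr1 opprK !mul1r mulN1r.
Qed.

Lemma chebT_iter_dvdz (m x : int) n j :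
  (m %| (chebT n).[x] - x)%Z -> (m %| (chebT (n ^ j)).[x] - x)%Z.
Proof.
move=> fix_x; elim: j => [|j IHj]; first by rewrite expn0 chebT1 hornerX subrr dvdz0.
rewrite expnS -chebT_comp horner_comp; apply: dvdz_subr_trans fix_x.
exact: dvdz_trans IHj (dvdz_hornerB _ _ _).
Qed.

Lemma chebT_iter_deriv_dvdz (m x : int) n j : (m %| (chebT n).[x] - x)%Z ->
  (m %| ((chebT (n ^ j))^`()).[x] - ((chebT n)^`()).[x] ^+ j)%Z.
Proof.
move=> fix_x; elim: j => [|j IHj].
  by rewrite expn0 chebT1 derivX hornerC expr0 subrr dvdz0.
rewrite expnS -chebT_comp deriv_comp hornerM horner_comp exprS dvdz_mulrB //.
exact: dvdz_trans (chebT_iter_dvdz j fix_x) (dvdz_hornerB _ _ _).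
Qed.

Section LeastPeriod.
Variables (p n : nat) (x : int) (N : nat).
Hypotheses (p_pr : prime p) (per_x : least_period p n x N).

Let s j := (chebT (n ^ j)).[x].

Lemma orbit_addn i j : s (i + j) = (chebT (n ^ i)).[s j].
Proof. by rewrite /s -horner_comp chebT_comp expnD. Qed.

Lemma orbit_period : (p%:Z %| s N - x)%Z.
Proof. by have [_ [+ _]] := per_x; rewrite eqz_mod_dvd. Qed.

Lemma orbit_shift k i j : (p%:Z %| s i - s j)%Z -> (p%:Z %| s (k + i) - s (k + j))%Z.
Proof. by rewrite !orbit_addn => /dvdz_trans; apply; apply: dvdz_hornerB. Qed.

Lemma orbit_uniq i j : (i < j < N)%N -> ~~ (p%:Z %| s j - s i)%Z.
Proof.
case/andP=> lt_ij lt_jN; apply/negP => /(orbit_shift (N - j)).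
rewrite subnK ?(ltnW lt_jN) // => hN.
have [_ [_ per_min]] := per_x; apply: (per_min (N - j + i)%N); first lia.
by rewrite eqz_mod_dvd (dvdz_subr_trans _ orbit_period) // dvdz_subC.
Qed.

Lemma orbit_avoid1 j : ~~ (p%:Z %| x - 1)%Z -> (j < N)%N -> ~~ (p%:Z %| s j - 1)%Z.
Proof.
move=> pNx1 lt_jN; apply: contra pNx1 => psj1.
have := dvdz_trans psj1 (dvdz_hornerB (chebT (n ^ (N - j))) _ _).
rewrite -orbit_addn subnK ?(ltnW lt_jN) // (chebTV_at1 _).1 => psN1.
by rewrite (dvdz_subr_trans _ psN1) // dvdz_subC orbit_period.
Qed.

(* Either x = 1 (mod p) is fixed, so N = 1, or the residues of the first N
   iterates are distinct and avoid the fixed point 1. *)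
Lemma least_period_lt : (N < p)%N.
Proof.
have p_gt1 := prime_gt1 p_pr; have [N_gt0 [_ per_min]] := per_x.
have [px1|pNx1] := boolP (p%:Z %| x - 1)%Z.
  rewrite ltnNge; apply/negP => le_pN; apply: (per_min 1%N); first lia.
  rewrite eqz_mod_dvd expn1; apply: (@dvdz_subr_trans _ _ (chebT n).[1]).
    exact: dvdz_trans px1 (dvdz_hornerB _ _ _).
  by rewrite (chebTV_at1 n).1 dvdz_subC.
have p_neq0 := primez_neq0 p_pr.
pose r j := `|(s j %% p)%Z|%N.
have rE j : (r j)%:Z = (s j %% p)%Z by rewrite gez0_abs ?modz_ge0.
have r_lt j : (r j < p)%N by rewrite -ltz_nat rE ltz_pmod // ltz_nat prime_gt0.
have r_inj : {in iota 0 N &, injective r}.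
  move=> i j; rewrite !mem_iota !add0n => lt_iN lt_jN /(congr1 Posz); rewrite !rE.
  move/eqP; rewrite eqz_mod_dvd; case: (ltngtP i j) => [lt_ij|lt_ji|//].
    by rewrite dvdz_subC (negbTE (orbit_uniq _)) ?lt_ij.
  by rewrite (negbTE (orbit_uniq _)) ?lt_ji.
have r_sub : {subset map r (iota 0 N) <= rem 1%N (iota 0 p)}.
  move=> _ /mapP [j + ->]; rewrite mem_iota add0n => lt_jN.
  rewrite (mem_rem_uniq _ (iota_uniq 0 p)) inE mem_iota add0n r_lt leq0n !andbT.
  apply: contra (orbit_avoid1 pNx1 lt_jN) => /eqP rj1.
  by rewrite -eqz_mod_dvd; apply/eqP; rewrite -rE rj1 modz_small.
have r_uniq : uniq (map r (iota 0 N)) by rewrite map_inj_in_uniq // iota_uniq.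
have := uniq_leq_size r_uniq r_sub.
by rewrite size_map size_iota size_rem ?size_iota ?mem_iota //; lia.
Qed.

End LeastPeriod.

Lemma mult_order_dvdn p (a : int) o e :
  mult_order p a o -> (p%:Z %| a ^+ e - 1)%Z -> (o %| e)%N.
Proof.
case=> o_gt0 [ao1 o_min] ae1; rewrite eqz_mod_dvd in ao1.
have ar1 : (p%:Z %| a ^+ (e %% o) - 1)%Z.
  have aqo1 : (p%:Z %| (a ^+ o) ^+ (e %/ o) - 1)%Z.
    by rewrite -(expr1n _ (e %/ o)); apply: dvdz_trans (dvdz_exprB _ _ _).
  move: ae1; rewrite {1}(divn_eq e o) exprD mulnC exprM.
  have -> : (a ^+ o) ^+ (e %/ o) * a ^+ (e %% o) - 1 =
            ((a ^+ o) ^+ (e %/ o) - 1) * a ^+ (e %% o) + (a ^+ (e %% o) - 1) by ring.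
  by rewrite rpredDl // dvdz_mulr.
apply/dvdnP; exists (e %/ o)%N; case: (posnP (e %% o)) => [r0|r_gt0].
  by rewrite {1}(divn_eq e o) r0 addn0.
by case: (o_min (e %% o)%N); rewrite ?ltn_pmod ?r_gt0 ?eqz_mod_dvd.
Qed.

Lemma fermat_dvdz p (a : int) : prime p -> ~~ (p%:Z %| a)%Z ->
  (p%:Z %| a ^+ p.-1 - 1)%Z.
Proof.
move=> p_pr pNa; have p_neq0 := primez_neq0 p_pr.
set b := `|(a %% p)%Z|%N.
have bE : b%:Z = (a %% p)%Z by rewrite gez0_abs ?modz_ge0.
have b_lt : (b < p)%N by rewrite -ltz_nat bE ltz_pmod // ltz_nat prime_gt0.
have cop_bp : coprime b p.
  rewrite coprime_sym prime_coprime //; apply: contra pNa => pb.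
  apply/dvdz_mod0P; rewrite -bE; case: (posnP b) => [-> //|b_gt0].
  by rewrite gtnNdvd ?b_gt0 in pb.
have := Euler_exp_totient cop_bp; rewrite totient_prime // => Eb.
rewrite -eqz_mod_dvd; apply/eqP.
by rewrite -modzXm -bE -[b%:Z]natz -natrX natz modz_nat Eb -modz_nat.
Qed.

Lemma mult_order_lt p (a : int) o : prime p -> mult_order p a o -> (o < p)%N.
Proof.
move=> p_pr ord_a; have [o_gt0 [ao1 _]] := ord_a; rewrite eqz_mod_dvd in ao1.
have pNa : ~~ (p%:Z %| a)%Z.
  apply/negP => pa; have pao : (p%:Z %| a ^+ o)%Z by apply: dvdz_exp.
  have := rpredB pao ao1; rewrite opprB addrC subrK dvdz1 /=.
  by apply/negP; rewrite neq_ltn prime_gt1 ?orbT.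
have p_gt1 := prime_gt1 p_pr.
suff : (o <= p.-1)%N by lia.
by apply: dvdn_leq; [lia | exact: mult_order_dvdn ord_a (fermat_dvdz p_pr pNa)].
Qed.

Lemma pfactor_dvdz_exprn_sub1 p w k (a : int) : prime p -> ~~ (p %| k)%N ->
  (p%:Z %| a - 1)%Z -> (p%:Z ^+ w %| a ^+ k - 1)%Z = (p%:Z ^+ w %| a - 1)%Z.
Proof.
move=> p_pr pNk pa1; rewrite subrX1 Gauss_dvdzl // coprimezXl //.
set S := \sum_(i < k) a ^+ i.
have pSk : (p%:Z %| S - k%:R)%Z.
  rewrite -[k in k%:R]card_ord -sumr_const -sumrB rpred_sum // => i _.
  by rewrite -(expr1n _ i); apply: dvdz_trans pa1 (dvdz_exprB _ _ _).
rewrite coprimezE /= prime_coprime //; apply: contra pNk => pS.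
by rewrite -(dvdzE p k) -[k%:Z]natz -[_%:R](subKr S) rpredB.
Qed.

Lemma mult_order_lift p w (a : int) o M : prime p -> mult_order p a o ->
  ~~ (p %| M)%N -> (p%:Z %| a ^+ M - 1)%Z ->
  (p%:Z ^+ w %| a ^+ M - 1)%Z = (p%:Z ^+ w %| a ^+ o - 1)%Z.
Proof.
move=> p_pr ord_a pNM paM1; have [_ [ao1 _]] := ord_a; rewrite eqz_mod_dvd in ao1.
have /divnK ME := mult_order_dvdn ord_a paM1.
rewrite -ME mulnC exprM pfactor_dvdz_exprn_sub1 //; apply: contra pNM => pk.
by rewrite -ME dvdn_mulr.
Qed.

Lemma dvdz_sqr_sub1 p w (t e : int) : prime p -> (2 < p)%N ->
  (p%:Z ^+ w %| t ^+ 2 - e)%Z -> (p%:Z %| t - 1)%Z ->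
  (p%:Z ^+ w %| t - 1)%Z = (p%:Z ^+ w %| e - 1)%Z.
Proof.
move=> p_pr p_gt2 pw_te pt1.
rewrite (_ : e - 1 = (t - 1) * (t + 1) - (t ^+ 2 - e)); last by ring.
rewrite [in RHS]rpredBr // Gauss_dvdzl // coprimezXl // coprimezE /= prime_coprime //.
apply/negP; rewrite -(dvdzE p) => pt1'.
have := rpredB pt1' pt1.
by rewrite (_ : t + 1 - (t - 1) = 2%:Z); [rewrite dvdzE /= gtnNdvd | ring].
Qed.

Lemma logn_fact_lt p m : prime p -> (4 < p)%N -> (0 < m)%N -> (4 * logn p m`! < m)%N.
Proof.
move=> p_pr p_gt4 m_gt0; rewrite logn_fact //.
elim: m.+1 {-2}m m_gt0 => [|k IHk] {}m m_gt0; first by rewrite big_geq.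
case: k IHk => [|k] IHk; first by rewrite big_geq.
rewrite big_nat_recl //.
under eq_bigr => i _ do rewrite expnS divnMA.
have le_pm : (p * (m %/ p) <= m)%N by rewrite mulnC leq_divM.
case: (posnP (m %/ p)) => [q0|q_gt0].
  by rewrite q0 big1 ?addn0 ?muln0 // => i _; rewrite div0n.
by have := IHk _ q_gt0; nia.
Qed.

Section ChebyshevNearOne.
Variable d : nat.

Let P := chebT d \Po (1 - 'X).

Lemma chebT_1subX_deriv : P^`() = - ((chebT d)^`() \Po (1 - 'X)).
Proof. by rewrite deriv_comp !derivE sub0r mulrN1. Qed.

Lemma chebT_1subX_deriv2 : P^`()^`() = (chebT d)^`()^`() \Po (1 - 'X).
Proof. by rewrite chebT_1subX_deriv derivN deriv_comp !derivE sub0r mulrN1 opprK. Qed.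

Lemma chebT_1subX_ode :
  'X * (2 - 'X) * P^`()^`() + (1 - 'X) * P^`() + P *+ (d * d) = 0.
Proof.
have := congr1 (comp_poly (1 - 'X)) (chebT_ode d).
rewrite !(rmorphD, rmorphN, rmorphM, rmorphMn, rmorph1, rmorphXn, rmorph0) /=.
have T'E : (chebT d)^`() \Po (1 - 'X) = - P^`() by rewrite chebT_1subX_deriv opprK.
rewrite comp_polyX -chebT_1subX_deriv2 T'E -/P => ode; rewrite -[RHS]ode; ring.
Qed.

Lemma chebT_1subX_coef0 : P`_0 = 1.
Proof. by rewrite -horner_coef0 horner_comp !hornerE (chebTV_at1 d).1. Qed.

Lemma chebT_1subX_coef1 : P`_1 = - (d * d)%:R.
Proof.
rewrite -[P`_1]mulr1n -coef_deriv -horner_coef0.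
by rewrite chebT_1subX_deriv hornerN horner_comp !hornerE chebT_deriv_at1.
Qed.

Lemma chebT_1subX_coefS k :
  P`_k.+1 * (k.+1 * (2 * k).+1)%:R = P`_k * ((k * k)%:R - (d * d)%:R).
Proof.
have ode : P^`()^`() * 'X *+ 2 - P^`()^`() * 'X * 'X + P^`() - P^`() * 'X +
           P *+ (d * d) = 0.
  by rewrite -[RHS]chebT_1subX_ode; ring.
have := congr1 (fun q : {poly int} => q`_k) ode.
rewrite /= coef0 !(coefD, coefN, coefMn, coefMX, coef_deriv).
by case: k => [|[|k]] /= ode_k; apply/eqP;
  rewrite -subr_eq0 -[X in _ == X]ode_k; apply/eqP; ring.
Qed.

Lemma chebT_1subX_coef_fact k :
  ((2 * k)`!)%:R * P`_k = 2 ^+ k * \prod_(j < k) ((j * j)%:R - (d * d)%:R).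
Proof.
elim: k => [|k IHk]; first by rewrite chebT_1subX_coef0 big_ord0 expr0 !mulr1.
rewrite big_ord_recr /= exprS (_ : 2 * k.+1 = (2 * k).+2)%N ?mulnS // !factS.
transitivity (2 * (2 * k)`!%:R * (P`_k.+1 * (k.+1 * (2 * k).+1)%:R)); first ring.
rewrite chebT_1subX_coefS.
transitivity (2 * ((2 * k)`!%:R * P`_k) * ((k * k)%:R - (d * d)%:R)); first ring.
by rewrite IHk; ring.
Qed.

(* (2k)! c_k has the factor 1 - d^2, and (2k)! has fewer than k/2 factors p. *)
Lemma chebT_1subX_coef_dvdz p u k : prime p -> (4 < p)%N ->
  (p%:Z ^+ u %| (d * d)%:R - 1)%Z -> (2 <= k)%N ->
  (p%:Z ^+ (u + 2) %| P`_k * p%:Z ^+ k)%Z.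
Proof.
move=> p_pr p_gt4 pu k_ge2; have p_neq0 := primez_neq0 p_pr.
have fact_dvd : (p%:Z ^+ (k + u) %| ((2 * k)`!)%:R * (P`_k * p%:Z ^+ k))%Z.
  rewrite mulrA chebT_1subX_coef_fact mulrC exprD dvdz_mul //.
  case: k k_ge2 => [|[|k]] // _; rewrite !big_ord_recl; do 2 apply: dvdz_mull.
  by apply: dvdz_mulr; rewrite /= mul1n dvdz_subC.
have [m cop_pm factE] := pfactor_coprime p_pr (fact_gt0 (2 * k)).
have a_lt : (4 * logn p (2 * k)`! < 2 * k)%N by apply: logn_fact_lt => //; lia.
move: fact_dvd; rewrite factE natrM natrX mulrAC.
set a := logn p _ in a_lt *; set X := P`_k * _.
rewrite (_ : k + u = a + (k + u - a))%N; last lia.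
rewrite !natz exprD (mulrC (p%:Z ^+ a)) dvdz_mul2r ?expf_neq0 // Gauss_dvdzr; last first.
  by rewrite coprimezXl // coprimezE.
by apply: dvdz_trans; apply: dvdz_exp2l; lia.
Qed.

Lemma chebT_1subX_horner (y : int) :
  P.[y] = 1 - (d * d)%:R * y + \sum_(i < size P) P`_i.+2 * y ^+ i.+2.
Proof.
rewrite (horner_coef_wide y (leqW (leqnSn (size P)))) !big_ord_recl.
by rewrite chebT_1subX_coef0 chebT_1subX_coef1 expr0 expr1; ring.
Qed.

Lemma chebT_1subX_deriv_horner (y : int) :
  P^`().[y] = - (d * d)%:R + \sum_(i < size P^`()) P`_i.+2 *+ i.+2 * y ^+ i.+1.
Proof.
rewrite (horner_coef_wide y (leqnSn (size P^`()))) big_ord_recl.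
rewrite coef_deriv chebT_1subX_coef1 expr0 mulr1 mulr1n; congr (_ + _).
by apply: eq_bigr => i _; rewrite coef_deriv lift0.
Qed.

(* If p^u | d^2 - 1 then p^(u+2) divides the tail of P(p), hence (d^2 - 1) p. *)
Lemma chebT_1subp_dvdz p w : prime p -> (4 < p)%N ->
  (p%:Z ^+ w %| (chebT d).[1 - p%:Z] - (1 - p%:Z))%Z ->
  (p%:Z ^+ w.-1 %| (d * d)%:R - 1)%Z.
Proof.
move=> p_pr p_gt4; have p_neq0 := primez_neq0 p_pr.
have <- : P.[p%:Z] = (chebT d).[1 - p%:Z] by rewrite horner_comp !hornerE.
rewrite chebT_1subX_horner; set S := \sum_(i < _) _ => fix_p.
suff: forall u, (u <= w.-1)%N -> (p%:Z ^+ u %| (d * d)%:R - 1)%Z by apply.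
elim=> [|u IHu] le_uw; first by rewrite dvd1z.
have pS : (p%:Z ^+ (u + 2) %| S)%Z.
  by apply: rpred_sum => i _; apply: chebT_1subX_coef_dvdz => //; apply: IHu; lia.
have pw : (p%:Z ^+ (u + 2) %| p%:Z ^+ w)%Z by apply: dvdz_exp2l; lia.
have : (p%:Z ^+ (u + 2) %| ((d * d)%:R - 1) * p%:Z)%Z.
  rewrite (_ : _ * _ = S - (1 - (d * d)%:R * p%:Z + S - (1 - p%:Z))); last by ring.
  by rewrite rpredB // (dvdz_trans pw).
by rewrite addn2 exprSr dvdz_mul2r.
Qed.

Lemma chebT_deriv_1subp_dvdz p w : prime p -> (4 < p)%N -> (0 < w)%N ->
  (p%:Z ^+ w %| (chebT d).[1 - p%:Z] - (1 - p%:Z))%Z ->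
  (p%:Z ^+ w %| ((chebT d)^`()).[1 - p%:Z] - (d * d)%:R)%Z.
Proof.
move=> p_pr p_gt4 w_gt0 fix_p; have p_neq0 := primez_neq0 p_pr.
have pd := chebT_1subp_dvdz p_pr p_gt4 fix_p.
have -> : ((chebT d)^`()).[1 - p%:Z] = - P^`().[p%:Z].
  by rewrite chebT_1subX_deriv hornerN horner_comp !hornerE opprK.
rewrite chebT_1subX_deriv_horner opprD opprK addrAC subrr add0r rpredN.
apply: rpred_sum => i _.
have := chebT_1subX_coef_dvdz (k := i.+2) p_pr p_gt4 pd isT.
rewrite (_ : (w.-1 + 2 = w.+1)%N) => [pw|]; last lia.
by rewrite -(dvdz_mul2r p_neq0) -mulrA -!exprSr mulrnAl rpredMn.
Qed.

End ChebyshevNearOne.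

Lemma coprime_sqr_sub1_odd p n : prime p -> (2 < p)%N -> coprime n (p ^ 2 - 1) -> odd n.
Proof.
move=> p_pr p_gt2 cop_n; have [p2|p_odd] := even_prime p_pr; first by rewrite p2 in p_gt2.
apply: contraLR cop_n; rewrite -dvdn2 => two_n; apply/negP => /(coprime_dvdl two_n).
by rewrite coprime2n oddB ?expn_gt0 ?prime_gt0 // oddX p_odd.
Qed.

Lemma chebT_deriv_sqr_dvdz (m x : int) d : coprimez m (1 - x ^+ 2) ->
  (m %| (chebT d).[x] - x)%Z -> (m %| ((chebT d)^`()).[x] ^+ 2 - (d * d)%:R)%Z.
Proof.
move=> cop_m fix_x; rewrite -(Gauss_dvdzr _ cop_m).
have := congr1 (horner^~ x) (chebT_deriv_sqr d).
rewrite hornerM hornerMn !(hornerD, hornerN, hornerC, hornerXn, horner_exp).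
rewrite -mulr_natr => sqrE; rewrite mulrBr sqrE.
have -> : (1 - (chebT d).[x] ^+ 2) * (d * d)%:R - (1 - x ^+ 2) * (d * d)%:R =
          - (((chebT d).[x] - x) * (((chebT d).[x] + x) * (d * d)%:R)) by ring.
by rewrite rpredN dvdz_mulr.
Qed.

Lemma coprimez_1sub_sqr p (x : nat) : prime p -> (x < p)%N -> x != 1%N -> x.+1 != p ->
  coprimez p%:Z (1 - x%:Z ^+ 2).
Proof.
move=> p_pr lt_xp x_neq1 xS_neq_p; rewrite coprimezE /= prime_coprime //.
case: x lt_xp x_neq1 xS_neq_p => [|y] lt_yp y_neq0 yS_neq_p.
  by rewrite expr0n subr0 /= dvdn1 neq_ltn prime_gt1 ?orbT.
have -> : 1 - y.+1%:Z ^+ 2 = - (y * y.+2)%N%:Z by rewrite -!natz; ring.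
rewrite abszN absz_nat Euclid_dvdM // negb_or !gtnNdvd //; lia.
Qed.

Lemma chebT_deriv_fixpoint_dvdz p w d (x : nat) :
  prime p -> (4 < p)%N -> odd d -> (0 < w)%N -> (x < p)%N ->
  (p%:Z ^+ w %| (chebT d).[x%:Z] - x%:Z)%Z ->
  (p%:Z %| ((chebT d)^`()).[x%:Z] - 1)%Z ->
  (p%:Z ^+ w %| ((chebT d)^`()).[x%:Z] - 1)%Z = (p%:Z ^+ w %| (d * d)%:R - 1)%Z.
Proof.
move=> p_pr p_gt4 d_odd w_gt0 lt_xp fix_x t1.
have [-> | x_neq1] := eqVneq x 1%N; first by rewrite chebT_deriv_at1.
have [xE | xS_neq_p] := eqVneq x.+1 p.
  have xN : x%:Z = - (1 - p%:Z) by rewrite -xE -addn1 PoszD; ring.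
  have [TN T'N] := chebT_odd_oppr (1 - p%:Z) d_odd.
  rewrite xN TN -opprD rpredN in fix_x; rewrite xN T'N.
  have t_e := chebT_deriv_1subp_dvdz p_pr p_gt4 w_gt0 fix_x.
  by rewrite -(subrKA (d * d)%:R) rpredDl.
apply: dvdz_sqr_sub1 => //; first exact: ltn_trans p_gt4.
by apply: chebT_deriv_sqr_dvdz; rewrite // coprimezXl ?coprimez_1sub_sqr.
Qed.

Theorem lemma13 (p n x w Nx lx ordn2 : nat) :
  prime p -> (3 < p)%N -> (1 < n)%N ->
  coprime n p -> coprime n (p ^ 2 - 1) ->
  (x <= p - 1)%N -> (0 < w)%N ->
  least_period p n (x : int) Nx ->
  mult_order p ((chebT (n ^ Nx))^`()).[x : int] lx ->
  mult_order p ((n ^ 2)%N : int) ordn2 ->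
  ((chebT (n ^ (Nx * lx))).[x : int] == (x : int) %[mod ((p ^ w)%N : int)])%Z ->
  (((chebT (n ^ (Nx * lx)))^`()).[x : int] == 1 %[mod ((p ^ w)%N : int)])%Z
  <-> (((n ^ (2 * ordn2))%N : int) == 1 %[mod ((p ^ w)%N : int)])%Z.
Proof.
move=> p_pr p_gt3 _ _ cop_n le_xp w_gt0 per_x ord_x ord_n2.
rewrite !eqz_mod_dvd (PoszX p w) => fix_w.
have p_gt4 : (4 < p)%N by rewrite ltn_neqAle p_gt3 andbT; apply: contraTneq p_pr => <-.
have lt_xp : (x < p)%N by have := prime_gt0 p_pr; lia.
have [Nx_gt0 [+ _]] := per_x; rewrite eqz_mod_dvd => fix_Nx.
have [lx_gt0 [+ _]] := ord_x; rewrite eqz_mod_dvd => t_Nx.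
set d := (n ^ (Nx * lx))%N in fix_w *.
have d_odd : odd d by rewrite oddX (coprime_sqr_sub1_odd p_pr _ cop_n) ?orbT // ltnW.
have t1 : (p%:Z %| ((chebT d)^`()).[x%:Z] - 1)%Z.
  by apply: dvdz_subr_trans t_Nx; rewrite /d expnM; apply: chebT_iter_deriv_dvdz.
have e1 : (p%:Z %| (d * d)%:R - 1)%Z.
  have fix_d : (p%:Z ^+ 1 %| (chebT d).[x%:Z] - x%:Z)%Z.
    exact: dvdz_trans (dvdz_exp2l _ w_gt0) fix_w.
  have := chebT_deriv_fixpoint_dvdz p_pr p_gt4 d_odd (ltn0Sn 0) lt_xp fix_d.
  by rewrite !expr1 => <-.
have pNM : ~~ (p %| Nx * lx)%N.
  rewrite Euclid_dvdM // negb_or !gtnNdvd //.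
    exact: mult_order_lt p_pr ord_x.
  exact: least_period_lt p_pr per_x.
have dE : (d * d)%:R = ((n ^ 2)%N : int) ^+ (Nx * lx).
  by rewrite natz PoszM !PoszX -exprD addnn -mul2n exprM.
rewrite chebT_deriv_fixpoint_dvdz // dE (mult_order_lift w p_pr ord_n2 pNM) -?dE //.
by rewrite !PoszX exprM.
Qed.
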